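(* Let $G$ be a finite nilpotent group and let $H$ be an arbitrary finite group. Then $P_e(G)\cong P_e(H)$ (as graphs) if and only if $H$ is nilpotent and, for every prime $p$, $P_e(G_p)\cong P_e(H_p)$, where $G_p$ and $H_p$ denote the Sylow $p$-subgroups of $G$ and $H$, respectively.
   Context: All groups are finite. For a group $X$, the enhanced power graph $P_e(X)$ is the simple graph with vertex set $X$ in which two distinct vertices $x,y$ are adjacent if and only if the subgroup $\langle x,y\rangle$ is cyclic. *)

From mathcomp Require Import all_boot all_fingroup all_solvable.
Set Implicit Arguments. Unset Strict Implicit. Unset Printing Implicit Defensive.
Local Open Scope group_scope.

(* Enhanced power graph P_e(G) of a group G : {group gT}: vertex set G,
   distinct x, y adjacent iff <x, y> is cyclic. *)
Definition epg_adj (gT : finGroupType) (x y : gT) : bool :=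
  (x != y) && cyclic <<[set x; y]>>.

Definition epg_iso (gT hT : finGroupType) (G : {set gT}) (H : {set hT}) : Prop :=
  exists f : gT -> hT,
    [/\ {in G &, injective f}, f @: G = H &
        {in G &, forall x y, epg_adj (f x) (f y) = epg_adj x y}].

(* For x in G let D(x) be the set of vertices whose closed neighbourhood in
   P_e(G) contains that of x.  D(x) is the intersection of the maximal cyclic
   subgroups through x, hence a cyclic subgroup, and the number of elements of
   order m among the closed twins of x depends only on graph data (the sizes of
   the D(z), z in D(x)).  An isomorphism P_e(G) ~= P_e(H) can therefore be
   rearranged inside each twin class into one that preserves element orders.
   When G is nilpotent its p-elements form O_p(G), so the p-elements of H are
   just as many as |H|_p: they form the unique Sylow p-subgroup of H, which is
   thus nilpotent, and the rearranged isomorphism restricts to the Sylow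
   subgroups.  Conversely, if G = A x B with A a pi-group and B a pi'-group,
   <a1 b1, a2 b2> is cyclic iff <a1, a2> and <b1, b2> are, so isomorphisms of
   the Sylow subgroups multiply to one between the nilpotent groups G and H. *)

From mathcomp Require Import all_boot all_fingroup all_solvable.
Set Implicit Arguments. Unset Strict Implicit. Unset Printing Implicit Defensive.
Local Open Scope group_scope.

Lemma fibre_preserving_bij (aT rT : finType) (K : eqType) (y0 : rT)
    (A : {set aT}) (B : {set rT}) (kA : aT -> K) (kB : rT -> K) :
    (forall k, #|[set x in A | kA x == k]| = #|[set y in B | kB y == k]|) ->
  exists g : aT -> rT,
    [/\ {in A &, injective g}, g @: A = B & {in A, forall x, kB (g x) = kA x}].
Proof.
move=> card_fibres.
pose eA k := enum [set x in A | kA x == k].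
pose eB k := enum [set y in B | kB y == k].
have size_e k : size (eB k) = size (eA k) by rewrite -!cardE card_fibres.
have mem_eA x : x \in A -> x \in eA (kA x) by move=> xA; rewrite mem_enum inE xA /=.
pose g x := nth y0 (eB (kA x)) (index x (eA (kA x))).
have gP x : x \in A -> g x \in [set y in B | kB y == kA x].
  by move=> xA; rewrite -mem_enum mem_nth // size_e index_mem mem_eA.
have kg x : x \in A -> kB (g x) = kA x by move/gP; rewrite inE => /andP[_ /eqP].
exists g; split=> //.
  move=> x z xA zA gxz; have kxz : kA x = kA z by rewrite -kg // gxz kg.
  have [xe ze] : x \in eA (kA x) /\ z \in eA (kA x) by rewrite {2}kxz !mem_eA.
  move: gxz; rewrite /g -kxz => /eqP.
  rewrite nth_uniq ?enum_uniq ?size_e ?index_mem // => /eqP ixz.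
  by rewrite -(nth_index x xe) ixz nth_index.
apply/setP=> y; apply/imsetP/idP=> [[x xA ->] | yB].
  by have := gP x xA; rewrite inE => /andP[].
have ye : y \in eB (kB y) by rewrite mem_enum inE yB /=.
have iy : index y (eB (kB y)) < size (eA (kB y)) by rewrite -size_e index_mem.
have [x0 _] : exists x0, x0 \in eA (kB y).
  by case: (eA (kB y)) iy => // x0 s _; exists x0; rewrite mem_head.
set x := nth x0 (eA (kB y)) (index y (eB (kB y))).
have : x \in [set x in A | kA x == kB y] by rewrite -mem_enum mem_nth.
rewrite inE => /andP[xA /eqP kx]; exists x => //.
by rewrite /g kx index_uniq ?enum_uniq // nth_index.
Qed.

Lemma in_imset_subset (aT rT : finType) (f : aT -> rT) (D A B : {set aT}) :
    {in D &, injective f} -> A \subset D -> B \subset D ->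
  (f @: A \subset f @: B) = (A \subset B).
Proof.
move=> f_inj sAD sBD; apply/idP/idP=> [sfAB | /imsetS//].
apply/subsetP=> x xA; have /imsetP[y yB fxy] := subsetP sfAB _ (imset_f f xA).
by rewrite (f_inj _ _ (subsetP sAD _ xA) (subsetP sBD _ yB) fxy).
Qed.

Section Neighbourhoods.
Variables (T : finType) (r : rel T) (V : {set T}).
Implicit Types x y : T.

Definition nbhd x := [set y in V | r x y].
Definition dominators x := [set y in V | nbhd x \subset nbhd y].
Definition twins x := [set y in V | nbhd y == nbhd x].

Lemma nbhd_sub x : nbhd x \subset V.
Proof. by apply/subsetP=> y; rewrite inE => /andP[]. Qed.

Lemma mem_nbhd x y : y \in V -> (y \in nbhd x) = r x y.
Proof. by rewrite inE => ->. Qed.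

Lemma dominators_sub x : dominators x \subset V.
Proof. by apply/subsetP=> y; rewrite inE => /andP[]. Qed.

Lemma dominators_id x : x \in V -> x \in dominators x.
Proof. by rewrite inE subxx andbT. Qed.

Lemma dominators_trans x y : y \in dominators x -> dominators y \subset dominators x.
Proof.
rewrite inE => /andP[_ sNxy]; apply/subsetP=> z; rewrite !inE => /andP[-> sNyz].
exact: subset_trans sNyz.
Qed.

Lemma twins_dominators x y : y \in twins x -> dominators y = dominators x.
Proof. by rewrite inE => /andP[_ /eqP eNyx]; apply/setP=> z; rewrite !inE eNyx. Qed.

End Neighbourhoods.

Section RelationIsomorphisms.
Variables (T T' : finType) (r : rel T) (r' : rel T') (V : {set T}) (V' : {set T'}).

Definition rel_iso (f : T -> T') :=
  [/\ {in V &, injective f}, f @: V = V' & {in V &, forall x y, r' (f x) (f y) = r x y}].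

Lemma card_rel_iso f : rel_iso f -> #|V| = #|V'|.
Proof. by case=> f_inj <- _; rewrite card_in_imset. Qed.

Variable f : T -> T'.
Hypotheses (f_inj : {in V &, injective f}) (fV : f @: V = V').
Hypothesis f_rel : {in V &, forall x y, r' (f x) (f y) = r x y}.

Lemma nbhd_rel_iso x : x \in V -> nbhd r' V' (f x) = f @: nbhd r V x.
Proof.
move=> xV; apply/setP=> y'; apply/idP/imsetP=> [|[y] /[!inE] /andP[yV rxy] ->].
  rewrite inE -fV => /andP[/imsetP[y yV ->]]; rewrite f_rel // => rxy.
  by exists y; rewrite ?inE ?yV.
by rewrite -fV imset_f //= f_rel.
Qed.

Lemma eq_nbhd_rel_iso x y : x \in V -> y \in V ->
  (nbhd r' V' (f x) == nbhd r' V' (f y)) = (nbhd r V x == nbhd r V y).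
Proof.
move=> xV yV; rewrite !nbhd_rel_iso // !eqEsubset.
by rewrite !(in_imset_subset f_inj) ?nbhd_sub.
Qed.

Lemma dominators_rel_iso x : x \in V -> dominators r' V' (f x) = f @: dominators r V x.
Proof.
move=> xV; apply/setP=> y'; apply/idP/imsetP=> [|[y] /[!inE] /andP[yV sNxy] ->].
  rewrite inE => /andP[]; rewrite -[in y' \in _]fV => /imsetP[y yV ->].
  rewrite !nbhd_rel_iso // (in_imset_subset f_inj) ?nbhd_sub // => sNxy.
  by exists y; rewrite ?inE ?yV.
by rewrite -[in _ \in V']fV imset_f //= !nbhd_rel_iso // (in_imset_subset f_inj) ?nbhd_sub.
Qed.

Lemma card_dominators_rel_iso x : x \in V -> #|dominators r' V' (f x)| = #|dominators r V x|.
Proof.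
move=> xV; rewrite dominators_rel_iso // card_in_imset //.
by apply: sub_in2 f_inj; apply/subsetP/dominators_sub.
Qed.

Lemma rel_iso_eq_nbhd g : symmetric r' ->
    {in V &, injective g} -> g @: V = V' ->
    {in V, forall x, nbhd r' V' (g x) = nbhd r' V' (f x)} ->
  rel_iso g.
Proof.
move=> r'C g_inj gV eNgf; split=> // x y xV yV.
have [fV' gV'] : (forall z, z \in V -> f z \in V') /\ (forall z, z \in V -> g z \in V').
  by split=> z zV; [rewrite -fV | rewrite -gV]; apply: imset_f.
rewrite -(@mem_nbhd _ r' V') ?gV' // eNgf // mem_nbhd ?gV' // r'C.
by rewrite -(@mem_nbhd _ r' V') ?fV' // eNgf // mem_nbhd ?fV' // r'C f_rel.
Qed.

End RelationIsomorphisms.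

Lemma rel_iso_sub (T T' : finType) (r : rel T) (r' : rel T') (V A : {set T})
    (V' : {set T'}) f :
  rel_iso r r' V V' f -> A \subset V -> rel_iso r r' A (f @: A) f.
Proof.
case=> f_inj _ f_rel sAV; have sub2 := sub_in2 (fun x => subsetP sAV x).
by split; [exact: sub2 f_inj | | exact: sub2 f_rel].
Qed.

Section CyclicPairs.
Variable gT : finGroupType.
Implicit Types x y : gT.

Definition cyclic2 x y := cyclic <<[set x; y]>>.

Lemma gen2_subG x y (M : {group gT}) : (<<[set x; y]>> \subset M) = (x \in M) && (y \in M).
Proof. by rewrite gen_subG subUset !sub1set. Qed.

Lemma mem_gen2l x y : x \in <<[set x; y]>>.
Proof. by rewrite mem_gen // !inE eqxx. Qed.

Lemma mem_gen2r x y : y \in <<[set x; y]>>.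
Proof. by rewrite mem_gen // !inE eqxx orbT. Qed.

Lemma cyclic2C : symmetric cyclic2.
Proof. by move=> x y; rewrite /cyclic2 setUC. Qed.

Lemma cyclic2xx x : cyclic2 x x.
Proof. by rewrite /cyclic2 setUid cycle_cyclic. Qed.

Lemma cyclic2_sub (M : {group gT}) x y : cyclic M -> x \in M -> y \in M -> cyclic2 x y.
Proof. by move=> cM xM yM; apply: cyclicS cM; rewrite gen2_subG xM. Qed.

End CyclicPairs.

Lemma epg_isoE (gT hT : finGroupType) (G : {set gT}) (H : {set hT}) :
  epg_iso G H <-> exists f, rel_iso (@cyclic2 gT) (@cyclic2 hT) G H f.
Proof.
have adjE f x y : {in G &, injective f} -> x \in G -> y \in G ->
    epg_adj (f x) (f y) = (x != y) && cyclic2 (f x) (f y).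
  by move=> f_inj xG yG; rewrite /epg_adj (inj_in_eq f_inj).
split=> [] [f [f_inj fGH f_adj]]; exists f; split=> // x y xG yG.
  have [<-|nxy] := eqVneq x y; first by rewrite !cyclic2xx.
  by have := f_adj x y xG yG; rewrite adjE // /epg_adj nxy.
by rewrite adjE // f_adj.
Qed.

Lemma card_cyclic_order (gT : finGroupType) (C : {set gT}) m : cyclic C ->
  #|[set y in C | #[y] == m]| = if m %| #|C| then totient m else 0.
Proof.
case/cyclicP=> c ->; case: ifPn => [m_dvd_c | m_ndvd_c]; last first.
  apply: eq_card0 => y; rewrite !inE; apply: contraNF m_ndvd_c => /andP[yc /eqP <-].
  exact: order_dvdG.
move: m_dvd_c; rewrite -orderE => /dvdnP[k ock]; have k_gt0 : 0 < k.
  by move: (order_gt0 c); rewrite ock muln_gt0 => /andP[].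
set a := c ^+ k; have oa : #[a] = m by rewrite orderXdiv ock ?dvdn_mulr ?mulKn.
rewrite -oa totient_gen; apply: eq_card => y; rewrite !inE /generator.
apply/andP/eqP=> [[yc /eqP oy] | eac]; last first.
  by rewrite -cycle_subG /order -eac cycle_subG mem_cycle.
apply/eqP; rewrite (eq_subG_cyclic (cycle_cyclic c)) ?cycle_subG ?mem_cycle //.
exact/eqP/esym.
Qed.

Section Dominators.
Variables (gT : finGroupType) (G : {group gT}).
Implicit Types x y z : gT.
Local Notation N := (nbhd (@cyclic2 gT) G).
Local Notation D := (dominators (@cyclic2 gT) G).

Lemma dominatorsE x : x \in G ->
  D x = G :&: \bigcap_(M : {group gT} | [max M of K | (K \subset G) && cyclic K] && (x \in M)) M.
Proof.
move=> xG; apply/setP=> y; rewrite !inE; apply: andb_id2l => yG.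
apply/idP/bigcapP=> [sNxy M /andP[maxM xM] | yM].
  have [/andP[sMG cM] maxM'] := maxgroupP maxM; have [c defM] := cyclicP cM.
  have cM' : c \in M by rewrite defM cycle_id.
  have : c \in N x by rewrite inE (subsetP sMG) //= (cyclic2_sub cM).
  move/(subsetP sNxy); rewrite inE => /andP[cG cyc_yc].
  have <- : <<[set y; c]>>%G :=: M.
    by apply: maxM'; rewrite ?gen2_subG ?yG ?cG // defM cycle_subG mem_gen2r.
  exact: mem_gen2l.
apply/subsetP=> z; rewrite !inE => /andP[zG cxz]; rewrite zG /=.
have [M maxM sxzM] : {M : {group gT} | [max M of K | (K \subset G) && cyclic K]
                                       & <<[set x; z]>> \subset M}.
  by apply: maxgroup_exists; rewrite gen2_subG xG zG.
have /andP[_ cM] := maxgroupp maxM; move: sxzM; rewrite gen2_subG => /andP[xM zM].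
by apply: (cyclic2_sub cM _ zM); apply: yM; rewrite maxM.
Qed.

Lemma dominators_cyclic x : x \in G -> cyclic (D x).
Proof.
move=> xG; have [M maxM sxM] : {M : {group gT} | [max M of K | (K \subset G) && cyclic K]
                                                & <[x]> \subset M}.
  by apply: maxgroup_exists; rewrite cycle_subG xG cycle_cyclic.
have /andP[_ cM] := maxgroupp maxM; rewrite dominatorsE //; apply: cyclicS cM.
by rewrite subIset // orbC bigcap_inf // maxM -cycle_subG.
Qed.

Lemma order_dvd_dominators y : y \in G -> #[y] %| #|D y|.
Proof.
move=> yG; have [c eDy] := cyclicP (dominators_cyclic yG).
have := dominators_id (@cyclic2 gT) yG; rewrite eDy; exact: order_dvdG.
Qed.

Lemma dvd_dominators_order x y z : x \in G -> y \in D x -> z \in D x ->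
  (#[y] %| #|D z|) = (y \in D z).
Proof.
move=> xG yDx zDx; have zG := subsetP (dominators_sub _ _ _) z zDx.
have [c eDx] := cyclicP (dominators_cyclic xG).
have [d eDz] := cyclicP (dominators_cyclic zG).
have sDzx := dominators_trans zDx; rewrite eDx in yDx sDzx; rewrite eDz in sDzx *.
by rewrite -cycle_subG -(cardSg_cyclic (cycle_cyclic c)) // cycle_subG.
Qed.

(* The twins of x of order m are the generators of the subgroup of order m of
   the cyclic group D x, unless that subgroup already lies in a smaller D z. *)
Definition twin_order x m :=
  (m %| #|D x|) && [forall z in D x, (m %| #|D z|) ==> (#|D z| == #|D x|)].

Lemma twins_orderE x m : x \in G ->
  [set y in twins (@cyclic2 gT) G x | #[y] == m] =
    if twin_order x m then [set y in D x | #[y] == m] else set0.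
Proof.
move=> xG; case: ifPn => [/andP[_ /forall_inP blocked] | no_twin].
  apply/setP=> y; rewrite !inE; case: (boolP (y \in G)) => //= yG.
  have [om | _] := eqVneq #[y] m; rewrite ?andbF ?andbT //.
  apply/eqP/idP=> [-> // | sNxy].
  have yDx : y \in D x by rewrite inE yG.
  have /eqP eDyx : #|D y| == #|D x|.
    by apply: (implyP (blocked y yDx)); rewrite -om order_dvd_dominators.
  have /eqP eqDyx : D y == D x by rewrite eqEcard dominators_trans ?eDyx /=.
  have : x \in D y by rewrite eqDyx dominators_id.
  by rewrite inE xG /= => sNyx; apply/eqP; rewrite eqEsubset sNyx.
apply/setP=> y; rewrite in_set in_set0; apply: contraNF no_twin.
case/andP=> /[dup] twin_y /[!inE] /andP[yG _] /eqP om.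
have eDyx := twins_dominators twin_y; have yDx : y \in D x by rewrite -eDyx dominators_id.
apply/andP; split; first by rewrite -eDyx -om order_dvd_dominators.
apply/forall_inP=> z zDx; rewrite -om (dvd_dominators_order xG) //.
apply/implyP=> /dominators_trans sDyz; rewrite eqn_leq subset_leq_card ?dominators_trans //.
by rewrite -eDyx subset_leq_card.
Qed.

Lemma card_twins_order x m : x \in G ->
  #|[set y in twins (@cyclic2 gT) G x | #[y] == m]| = if twin_order x m then totient m else 0.
Proof.
move=> xG; rewrite twins_orderE //; case: ifP => [/andP[m_dvd _] | _]; last exact: cards0.
by rewrite card_cyclic_order ?dominators_cyclic ?m_dvd.
Qed.

End Dominators.

Section CyclicIsomorphisms.
Variables (gT hT : finGroupType) (G : {group gT}) (H : {group hT}) (f : gT -> hT).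
Hypothesis iso_f : rel_iso (@cyclic2 gT) (@cyclic2 hT) G H f.

Lemma twin_order_rel_iso x m : x \in G -> twin_order H (f x) m = twin_order G x m.
Proof.
case: iso_f => f_inj fGH f_cyc xG.
have cardD := card_dominators_rel_iso f_inj fGH f_cyc.
rewrite /twin_order cardD // (dominators_rel_iso f_inj fGH f_cyc) //; congr (_ && _).
have DG z : z \in dominators (@cyclic2 gT) G x -> z \in G.
  exact: subsetP (dominators_sub _ _ _) z.
apply/forall_inP/forall_inP=> [Dm z zD | Dm _ /imsetP[z zD ->]]; last by rewrite cardD ?DG ?Dm.
by rewrite -cardD ?DG ?Dm ?imset_f.
Qed.

Lemma card_twins_order_rel_iso x m : x \in G ->
  #|[set y in twins (@cyclic2 hT) H (f x) | #[y] == m]| =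
    #|[set y in twins (@cyclic2 gT) G x | #[y] == m]|.
Proof.
case: (iso_f) => _ fGH _ xG.
by rewrite !card_twins_order ?twin_order_rel_iso // -fGH imset_f.
Qed.

Lemma rel_iso_order_preserving :
  exists2 g, rel_iso (@cyclic2 gT) (@cyclic2 hT) G H g & {in G, forall x, #[g x] = #[x]}.
Proof.
have [f_inj fGH f_cyc] := iso_f; pose NH := nbhd (@cyclic2 hT) H.
have [g [g_inj gGH kg]] : exists g : gT -> hT, [/\ {in G &, injective g}, g @: G = H &
    {in G, forall x, (NH (g x), #[g x]) = (NH (f x), #[x])}].
  apply: (fibre_preserving_bij 1 (kA := fun y => (NH (f y), #[y])) (kB := fun w => (NH w, #[w]))).
  move=> [S m].
  case: (boolP [exists x in G, S == NH (f x)]) => [/exists_inP[x xG /eqP->] | noS].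
    transitivity #|[set y in twins (@cyclic2 gT) G x | #[y] == m]|.
      apply: eq_card => y; rewrite !inE xpair_eqE; case: (boolP (y \in G)) => //= yG.
      by rewrite (eq_nbhd_rel_iso f_inj fGH f_cyc).
    rewrite -card_twins_order_rel_iso //.
    by apply: eq_card => w; rewrite !inE xpair_eqE andbA.
  rewrite !eq_card0 // => [w | y]; rewrite !inE xpair_eqE.
    apply/andP=> -[/[dup] wH]; rewrite -fGH => /imsetP[y yG ->] /andP[/eqP eS _].
    by case/exists_inP: noS; exists y; rewrite ?eS.
  apply/andP=> -[yG /andP[/eqP eS _]].
  by case/exists_inP: noS; exists y; rewrite ?eS.
exists g => [|x /kg[]//].
by apply: (rel_iso_eq_nbhd fGH f_cyc _ g_inj gGH) => [|x /kg[]]; first exact: cyclic2C.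
Qed.

End CyclicIsomorphisms.

Lemma pelts_nilpotent (gT : finGroupType) (G : {group gT}) pi :
  nilpotent G -> [set x in G | pi.-elt x] = 'O_pi(G).
Proof.
move=> nilG; apply/setP=> x; rewrite inE; have [xG | xG'] := boolP (x \in G).
  by rewrite (mem_Hall_pcore (nilpotent_pcore_Hall pi nilG) xG).
by apply/esym/negbTE; apply: contra xG'; apply: subsetP; apply: pcore_sub.
Qed.

Lemma Sylow_uniq_nilpotent (gT : finGroupType) (G : {group gT}) :
  (forall p (P Q : {group gT}), p.-Sylow(G) P -> p.-Sylow(G) Q -> P :=: Q) ->
  nilpotent G.
Proof.
move=> Syl_uniq; suff <- : 'F(G) = G by apply: Fitting_nil.
apply/eqP; rewrite eqEsubset Fitting_sub -{1}(Sylow_gen G) gen_subG.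
apply/bigcupsP=> P /SylowP[p _ sylP].
apply: Fitting_max; last exact: pgroup_nil (pHall_pgroup sylP).
rewrite /normal (pHall_sub sylP) /=; apply/subsetP=> x xG; apply/normP.
by apply: (Syl_uniq p (P :^ x)%G P _ sylP); rewrite pHallJ.
Qed.

Section OrderPreservingBijection.
Variables (gT hT : finGroupType) (G : {group gT}) (H : {group hT}) (g : gT -> hT).
Hypotheses (g_inj : {in G &, injective g}) (gGH : g @: G = H).
Hypothesis g_order : {in G, forall x, #[g x] = #[x]}.

Lemma imset_pelts pi : g @: [set x in G | pi.-elt x] = [set y in H | pi.-elt y].
Proof.
apply/setP=> y; apply/imsetP/idP=> [[x /[!inE] /andP[xG pi_x] ->] | /[!inE] /andP[]].
  by rewrite -gGH imset_f //= /p_elt g_order.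
rewrite -gGH => /imsetP[x xG ->]; rewrite /p_elt g_order // => pi_x.
by exists x; rewrite ?inE ?xG.
Qed.

Lemma Hall_order_preserving pi (Q : {group hT}) :
  nilpotent G -> pi.-Hall(H) Q -> Q :=: g @: 'O_pi(G).
Proof.
move=> nilG hallQ; rewrite -pelts_nilpotent // imset_pelts; apply/eqP.
rewrite eqEcard; apply/andP; split.
  apply/subsetP=> y yQ; rewrite inE (subsetP (pHall_sub hallQ)) //=.
  exact: mem_p_elt (pHall_pgroup hallQ) yQ.
have sub_in := sub_in2 (fun x => subsetP (pcore_sub pi G) x) g_inj.
rewrite -imset_pelts pelts_nilpotent // card_in_imset //.
rewrite (card_Hall (nilpotent_pcore_Hall pi nilG)) (card_Hall hallQ).
by rewrite -gGH card_in_imset.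
Qed.

End OrderPreservingBijection.

Lemma consttM_coprime (gT : finGroupType) pi (a b : gT) :
  commute a b -> pi.-elt a -> pi^'.-elt b -> (a * b).`_pi = a /\ (a * b).`_pi^' = b.
Proof.
move=> cab pi_a pi'_b; rewrite !consttM // (constt_p_elt pi_a) (constt_p_elt pi'_b).
have -> : b.`_pi = 1 by apply/constt1P.
have -> : a.`_pi^' = 1 by apply/constt1P; rewrite p_eltNK.
by rewrite mulg1 mul1g.
Qed.

Section CoprimeCentralProduct.
Variables (gT : finGroupType) (pi : nat_pred) (A B : {group gT}).
Hypotheses (piA : pi.-group A) (pi'B : pi^'.-group B) (cAB : B \subset 'C(A)).

Lemma consttM_central a b : a \in A -> b \in B -> (a * b).`_pi = a /\ (a * b).`_pi^' = b.
Proof.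
move=> aA bB; apply: consttM_coprime; rewrite ?(mem_p_elt piA) ?(mem_p_elt pi'B) //.
exact/esym/(centP (subsetP cAB b bB)).
Qed.

Lemma cyclic2_central a1 a2 b1 b2 : a1 \in A -> a2 \in A -> b1 \in B -> b2 \in B ->
  cyclic2 (a1 * b1) (a2 * b2) = cyclic2 a1 a2 && cyclic2 b1 b2.
Proof.
move=> a1A a2A b1B b2B.
have [pi_1 pi'_1] := consttM_central a1A b1B; have [pi_2 pi'_2] := consttM_central a2A b2B.
apply/idP/andP=> [cyc12 | [/cyclicP[a ea] /cyclicP[b eb]]].
  pose X := [group of <<[set a1 * b1; a2 * b2]>>].
  have constt_X rho : (a1 * b1).`_rho \in X /\ (a2 * b2).`_rho \in X.
    by split; apply: subsetP (cycle_constt rho _); rewrite cycle_subG ?mem_gen2l ?mem_gen2r.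
  have [a1X a2X] := constt_X pi; have [b1X b2X] := constt_X pi^'.
  rewrite pi_1 pi_2 in a1X a2X; rewrite pi'_1 pi'_2 in b1X b2X.
  by split; apply: (@cyclic2_sub _ X _ _ cyc12).
have aA : a \in A by rewrite -cycle_subG -ea gen2_subG a1A.
have bB : b \in B by rewrite -cycle_subG -eb gen2_subG b1B.
have [pi_ab pi'_ab] := consttM_central aA bB.
have [sa sb] : <[a]> \subset <[a * b]> /\ <[b]> \subset <[a * b]>.
  by split; rewrite cycle_subG; [rewrite -{1}pi_ab | rewrite -{1}pi'_ab]; apply: cycle_constt.
rewrite -ea -eb !gen2_subG in sa sb; case/andP: sa => a1ab a2ab; case/andP: sb => b1ab b2ab.
by apply: (cyclic2_sub (cycle_cyclic (a * b))); apply: groupM.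
Qed.

End CoprimeCentralProduct.

Lemma epg_iso_dprod (gT hT : finGroupType) pi (A B G : {group gT}) (A' B' H : {group hT}) :
    A \x B = G -> A' \x B' = H ->
    pi.-group A -> pi^'.-group B -> pi.-group A' -> pi^'.-group B' ->
  epg_iso A A' -> epg_iso B B' -> epg_iso G H.
Proof.
move=> defG defH piA pi'B piA' pi'B' /epg_isoE[g iso_g] /epg_isoE[h iso_h].
have [[g_inj gAA' g_cyc] [h_inj hBB' h_cyc]] := (iso_g, iso_h).
have [_ _ cAB _] := dprodP defG; have [_ mulA'B' cA'B' _] := dprodP defH.
have constt_G x : x \in G -> x.`_pi \in A /\ x.`_pi^' \in B.
  move=> xG; have [a [b [aA bB -> _]]] := mem_dprod defG xG.
  by have [-> ->] := consttM_central piA pi'B cAB aA bB.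
have gA a : a \in A -> g a \in A' by move=> aA; rewrite -gAA' imset_f.
have hB b : b \in B -> h b \in B' by move=> bB; rewrite -hBB' imset_f.
pose F x : hT := g x.`_pi * h x.`_pi^'.
have constt_F x : x \in G -> (F x).`_pi = g x.`_pi /\ (F x).`_pi^' = h x.`_pi^'.
  by case/constt_G=> xA xB; exact (consttM_central piA' pi'B' cA'B' (gA _ xA) (hB _ xB)).
have F_inj : {in G &, injective F}.
  move=> x y xG yG eqF; have [[xA xB] [yA yB]] := (constt_G x xG, constt_G y yG).
  have [[Fx_pi Fx_pi'] [Fy_pi Fy_pi']] := (constt_F x xG, constt_F y yG).
  have e_pi : x.`_pi = y.`_pi by apply: g_inj; rewrite // -Fx_pi -Fy_pi eqF.
  have e_pi' : x.`_pi^' = y.`_pi^' by apply: h_inj; rewrite // -Fx_pi' -Fy_pi' eqF.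
  by rewrite -(consttC pi x) -(consttC pi y) e_pi e_pi'.
apply/epg_isoE; exists F; split=> //.
  apply/eqP; rewrite eqEcard card_in_imset // -(dprod_card defG) -(dprod_card defH).
  rewrite (card_rel_iso iso_g) (card_rel_iso iso_h) leqnn andbT.
  by apply/subsetP=> _ /imsetP[x /constt_G[xA xB] ->]; rewrite -mulA'B' mem_mulg ?gA ?hB.
move=> x y xG yG; have [[xA xB] [yA yB]] := (constt_G x xG, constt_G y yG).
rewrite -{2}(consttC pi x) -{2}(consttC pi y) (cyclic2_central piA pi'B cAB) //.
by rewrite (cyclic2_central piA' pi'B' cA'B') ?gA ?hB // g_cyc ?h_cyc.
Qed.

Lemma epg_iso1 (gT hT : finGroupType) (G : {group gT}) (H : {group hT}) :
  G :=: 1 -> H :=: 1 -> epg_iso G H.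
Proof.
move=> -> ->; exists (fun _ => 1).
split=> [x y | | x y]; rewrite ?set1gE ?imset_set1 // !inE => /eqP-> /eqP-> //.
by rewrite /epg_adj !eqxx.
Qed.

Lemma Sylow_pcoreC (gT : finGroupType) (G P : {group gT}) (p q : nat) :
  nilpotent G -> q.-Sylow('O_p^'(G)) P -> if q == p then P :=: 1 else q.-Sylow(G) P.
Proof.
move=> nilG sylP; case: eqP => [eqp | /eqP nqp].
  apply/eqP; rewrite trivg_card1; apply/eqP/(@pnat_1 p).
    by rewrite -eqp; apply: pHall_pgroup sylP.
  exact: pgroupS (pHall_sub sylP) (pcore_pgroup _ _).
exact: subHall_Sylow (nilpotent_pcore_Hall p^' nilG) nqp sylP.
Qed.

Lemma epg_iso_nilpotent (gT hT : finGroupType) (G : {group gT}) (H : {group hT}) :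
    nilpotent G -> nilpotent H ->
    (forall p, prime p -> forall (P : {group gT}) (Q : {group hT}),
       P \in 'Syl_p(G) -> Q \in 'Syl_p(H) -> epg_iso P Q) ->
  epg_iso G H.
Proof.
elim: {G}_.+1 {-2}G (ltnSn #|G|) H => // n IHn G leGn H nilG nilH isoSyl.
have [G1 | [p p_pr p_dv_G]] := trivgVpdiv G.
  apply: (epg_iso1 G1); have [// | [p p_pr p_dv_H]] := trivgVpdiv H.
  have [[P sylP] [Q sylQ]] := (Sylow_exists p G, Sylow_exists p H).
  have /epg_isoE[f /card_rel_iso] : epg_iso P Q by apply: (isoSyl p p_pr); rewrite inE.
  rewrite (card_Hall sylP) (card_Hall sylQ) G1 cards1 partn1 => H_p1.
  by have := p_part_gt1 p #|H|; rewrite -H_p1 mem_primes p_pr p_dv_H cardG_gt0.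
have [defG defH] := (nilpotent_pcoreC p nilG, nilpotent_pcoreC p nilH).
have [hallG hallH] := (nilpotent_pcore_Hall p nilG, nilpotent_pcore_Hall p nilH).
apply: (epg_iso_dprod (pi := p) defG defH); rewrite ?pcore_pgroup //.
  by apply: (isoSyl p p_pr); rewrite inE.
apply: IHn; rewrite ?(nilpotentS (pcore_sub _ _)) //.
  rewrite -ltnS (leq_trans _ leGn) // -(dprod_card defG) ltnS ltn_Pmull ?cardG_gt0 //.
  by rewrite (card_Hall hallG) p_part_gt1 mem_primes p_pr cardG_gt0.
move=> q q_pr P Q; rewrite !inE => /(Sylow_pcoreC nilG) sylP /(Sylow_pcoreC nilH) sylQ.
case: eqP sylP sylQ => _ sylP sylQ; first exact: epg_iso1.
by apply: (isoSyl q q_pr); rewrite inE.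
Qed.

Theorem theorem1 (gT hT : finGroupType) (G : {group gT}) (H : {group hT}) :
  nilpotent G ->
  (epg_iso G H <->
   nilpotent H /\
   (forall p : nat, prime p ->
      forall (P : {group gT}) (Q : {group hT}),
        P \in 'Syl_p(G) -> Q \in 'Syl_p(H) -> epg_iso P Q)).
Proof.
move=> nilG; split=> [/epg_isoE[f /rel_iso_order_preserving[g iso_g g_order]] | [nilH]].
  have [g_inj gGH _] := iso_g.
  have SylE p (Q : {group hT}) : p.-Sylow(H) Q -> Q :=: g @: 'O_p(G).
    by move=> sylQ; apply: (Hall_order_preserving g_inj gGH g_order nilG sylQ).
  split=> [|p _ P Q]; first by apply: Sylow_uniq_nilpotent => p P Q /SylE-> /SylE->.
  rewrite !inE => sylP /SylE->; apply/epg_isoE; exists g.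
  by rewrite (nilpotent_Hall_pcore nilG sylP); apply: rel_iso_sub iso_g (pcore_sub _ _).
exact: epg_iso_nilpotent.
Qed.
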